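(* Let $c\in(0,1)$, $f_{\mathrm{cost}}(x)=x^c$, and $F_{\mathrm{cost}}(p)=\sum_i p(i)^c$. For every set $S$ of $m=2$ discrete probability distributions, the greedy coupling satisfies $$F_{\mathrm{cost}}(\mathcal G_S)\le\Big(1-c^{1/(1-c)}(1/c-1)\Big)^{-1}\min_C F_{\mathrm{cost}}(C),$$ where the minimum is over couplings $C$ of $S$.
   Context: A coupling of two distributions is a joint distribution with those marginals; its cost is $F_{\mathrm{cost}}$ applied to its vector of probabilities. Greedy coupling algorithm: maintain the remaining masses of the states of each distribution in $S$. Repeatedly: let $r=\min_{p\in S}\max_j p(j)$; if $r=0$ stop; otherwise append $r$ as the next state of $\mathcal G_S$ and subtract $r$ from the largest remaining state of every distribution (ties broken arbitrarily). $\mathcal G_S$ is the resulting list of state masses. *)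

From HB Require Import structures.
From mathcomp Require Import all_boot all_order all_algebra.
From mathcomp Require Import reals exp.
Set Implicit Arguments. Unset Strict Implicit. Unset Printing Implicit Defensive.
Import Order.TTheory GRing.Theory Num.Theory.
Local Open Scope ring_scope.

Section Defs.
Variable R : realType.

Definition is_distr (T : finType) (p : T -> R) : Prop :=
  (forall i, 0 <= p i) /\ \sum_(i : T) p i = 1.

Definition is_coupling (T1 T2 : finType) (p1 : T1 -> R) (p2 : T2 -> R)
  (C : T1 * T2 -> R) : Prop :=
  (forall ij, 0 <= C ij) /\
  (forall i, \sum_(j : T2) C (i, j) = p1 i) /\
  (forall j, \sum_(i : T1) C (i, j) = p2 j).

Definition Fcost_seq (c : R) (s : seq R) : R := \sum_(x <- s) x `^ c.
Definition Fcost_fun (T : finType) (c : R) (p : T -> R) : R := \sum_(i : T) p i `^ c.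

Definition maxmass (T : finType) (a : T -> R) : R := \big[Order.max/0]_(i : T) a i.

Definition subat (T : finType) (a : T -> R) (i : T) (r : R) : T -> R :=
  fun k => if k == i then a k - r else a k.

(* greedy_run a b out : starting from remaining masses a, b, the greedy
   coupling algorithm (with SOME admissible tie-breaking) outputs the list out
   of state masses. *)
Inductive greedy_run (T1 T2 : finType) : (T1 -> R) -> (T2 -> R) -> seq R -> Prop :=
| greedy_stop a b :
    Order.min (maxmass a) (maxmass b) = 0 -> greedy_run a b [::]
| greedy_step a b (i : T1) (j : T2) out :
    Order.min (maxmass a) (maxmass b) != 0 ->
    a i = maxmass a -> b j = maxmass b ->
    greedy_run (subat a i (Order.min (maxmass a) (maxmass b)))
               (subat b j (Order.min (maxmass a) (maxmass b))) out ->
    greedy_run a b (Order.min (maxmass a) (maxmass b) :: out).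

End Defs.

(* View a coupling C as the measure putting mass C ij at level C ij; then
   F_cost(C) is the integral of v^(c-1) against it.  Since v^(c-1) is
   nonincreasing, Abel summation bounds this integral from below by the one
   against any signed measure Y of the same total mass whose upper tails
   dominate those of C, and the tail of C above t is at most the smaller of the
   tails of p1 and p2 above t.  Each greedy step, removing g = min A B from the
   two largest states A and B and leaving e = |A - B|, is recorded in Y as mass
   g + e at level g and -e at level e (only g at level g unless 0 < e < g).  The
   resulting Y dominates the tail profile of p1 and p2, and Young's inequality
   e^c <= e g^(c-1) + K g^c, K = c^(1/(1-c)) (1/c - 1), shows that each step
   contributes at least (1 - K) g^c to the integral against Y. *)

From HB Require Import structures.
From mathcomp Require Import all_boot all_order all_algebra.
From mathcomp Require Import reals exp.
From mathcomp Require Import ring lra zify.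
Import Order.TTheory GRing.Theory Num.Theory.
Set Implicit Arguments. Unset Strict Implicit. Unset Printing Implicit Defensive.
Local Open Scope ring_scope.

Lemma powR_le1 (R : realType) (a r : R) : 0 < a <= 1 -> 0 <= r -> a `^ r <= 1.
Proof. by move=> a01 r_ge0; rewrite -(powRr0 a) ger_powR. Qed.

Lemma le0_ger_powR (R : realType) (r : R) : r <= 0 ->
  {in Num.pos &, {homo (fun x : R => x `^ r) : x y /~ x <= y}}.
Proof.
move=> r_le0 x y; rewrite !posrE => x_gt0 y_gt0 xy.
rewrite -(opprK r) (powRN x) (powRN y) lef_pV2 ?posrE ?powR_gt0 //.
by rewrite ge0_ler_powR ?nnegrE ?oppr_ge0 ?(ltW x_gt0) ?(ltW y_gt0).
Qed.

Section YoungConstant.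
Variables (R : realType) (c : R).
Hypothesis c01 : 0 < c < 1.

(* The maximum of x^c - x over x >= 0, attained at x = c^(1/(1-c)). *)
Definition young_const : R := c `^ (1 / (1 - c)) * (1 / c - 1).

Let c_gt0 : 0 < c. Proof. by case/andP: c01. Qed.
Let c_lt1 : c < 1. Proof. by case/andP: c01. Qed.
Let c_ge0 : 0 <= c. Proof. exact: ltW. Qed.
Let c_neq0 : c != 0. Proof. by rewrite gt_eqF. Qed.
Let c1_neq0 : 1 - c != 0. Proof. by rewrite subr_eq0 eq_sym lt_eqF. Qed.

Lemma young_constE : young_const = (1 - c) * (c `^ c) `^ (1 - c)^-1.
Proof.
rewrite /young_const -powRrM.
have -> : 1 / (1 - c) = c * (1 - c)^-1 + 1 by field.
rewrite powRD ?c_neq0 ?implybT // (powRr1 c_ge0).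
have -> : 1 / c - 1 = (1 - c) / c by field.
by field.
Qed.

Lemma young_const_ge0 : 0 <= young_const.
Proof. by rewrite young_constE mulr_ge0 ?powR_ge0 // subr_ge0 ltW. Qed.

Lemma young_const_lt1 : young_const < 1.
Proof.
have cc_le1 : c `^ c <= 1 by apply: powR_le1; rewrite ?c_gt0 ?(ltW c_lt1).
have : (c `^ c) `^ (1 - c)^-1 <= 1.
  by apply: powR_le1; rewrite ?powR_gt0 ?cc_le1 ?invr_ge0 ?subr_ge0 ?(ltW c_lt1).
rewrite young_constE => ccc_le1.
apply: le_lt_trans (_ : _ <= 1 - c) _; last by rewrite ltrBlDr ltrDl.
by rewrite -[leRHS]mulr1 ler_wpM2l // subr_ge0 ltW.
Qed.

Lemma powR_le_add_young_const x : 0 <= x -> x `^ c <= x + young_const.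
Proof.
move=> x_ge0; rewrite young_constE.
have := @conjugate_powR R ((x / c) `^ c) (c `^ c) (c^-1) ((1 - c)^-1)
  (powR_ge0 _ _) (powR_ge0 _ _).
rewrite invr_gt0 c_gt0 invr_gt0 subr_gt0 c_lt1 !invrK addrC subrK => /(_ isT isT erefl).
have xc_ge0 : 0 <= x / c by rewrite divr_ge0.
rewrite -powRM // divfK // -powRrM mulfV // powRr1 // divfK //.
by rewrite mulrC.
Qed.

Lemma powR_le_add_young_const_scaled g e : 0 < g -> 0 <= e ->
  e `^ c <= e * g `^ (c - 1) + young_const * g `^ c.
Proof.
move=> g_gt0 e_ge0.
have g_ge0 : 0 <= g by rewrite ltW.
have gc_gt0 : 0 < g `^ c by rewrite powR_gt0.
have g_c1 : g `^ (c - 1) = g `^ c / g.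
  by rewrite -[in RHS](mulr_powRB1 g_ge0 c_gt0) mulrAC mulfV ?gt_eqF ?mul1r.
have eg_ge0 : 0 <= e / g by rewrite divr_ge0.
have := powR_le_add_young_const eg_ge0.
rewrite -(ler_pM2r gc_gt0) -powRM // divfK ?gt_eqF //.
by rewrite mulrDl -mulrA [_^-1 * _]mulrC -g_c1.
Qed.

End YoungConstant.

Section TailDominance.
Variable R : realType.
Implicit Types (Z X Y : seq (R * R)) (t : R) (D : {pred R}) (psi : R -> R).

(* A list of pairs (m, v) encodes a signed measure with mass m at level v. *)
Definition tail_mass Z t := \sum_(z <- Z | t <= z.2) z.1.

Lemma tail_mass_cat Z1 Z2 t :
  tail_mass (Z1 ++ Z2) t = tail_mass Z1 t + tail_mass Z2 t.
Proof. exact: big_cat. Qed.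

Lemma tail_mass_below Z t :
  (forall z, z \in Z -> t <= z.2) -> tail_mass Z t = \sum_(z <- Z) z.1.
Proof.
move=> Z_ge; rewrite /tail_mass big_seq_cond [RHS]big_seq; apply: eq_bigl => z.
by case: (boolP (z \in Z)) => //= /Z_ge ->.
Qed.

Lemma tail_mass_eq0 Z t : (forall z, z \in Z -> z.2 < t) -> tail_mass Z t = 0.
Proof.
move=> Z_lt; rewrite /tail_mass big_seq_cond big_pred0 // => z.
by apply/negbTE; case: (boolP (z \in Z)) => //= /Z_lt; rewrite ltNge.
Qed.

Lemma exists_top_level Z : Z != [::] ->
  exists2 w, w \in Z & forall z, z \in Z -> z.2 <= w.2.
Proof.
elim: Z => // z [|z' Z] IH _.
  by exists z => [|w]; rewrite mem_seq1 // => /eqP->.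
have [w wZ w_top] := IH isT.
have [zw|wz] := leP z.2 w.2.
  by exists w => [|u]; rewrite inE ?wZ ?orbT // => /predU1P[->|/w_top].
exists z => [|u]; rewrite inE ?eqxx // => /predU1P[->//|/w_top uw].
exact: le_trans uw (ltW wz).
Qed.

(* Abel summation: with v the top level, split psi = (psi - psi v) + psi v and
   recurse on the atoms strictly below v. *)
Lemma sum_mul_nonincreasing_ge0 D psi Z :
  {in D &, {homo psi : u v /~ u <= v}} -> {in D, forall v, 0 <= psi v} ->
  (forall z, z \in Z -> z.2 \in D) ->
  (forall t, 0 <= \sum_(z <- Z | z.2 < t) z.1) ->
  0 <= \sum_(z <- Z) z.1 * psi z.2.
Proof.
move: {2}(size Z) (leqnn (size Z)) => n.
elim: n D psi Z => [|n IH] D psi Z; first by rewrite leqn0 => /nilP->; rewrite big_nil.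
move=> sizeZ psi_dec psi_ge0 ZD Zcum.
have [->|/exists_top_level[w wZ w_top]] := eqVneq Z [::]; first by rewrite big_nil.
set v := w.2.
have -> : \sum_(z <- Z) z.1 * psi z.2 =
    \sum_(z <- Z) z.1 * (psi z.2 - psi v) + psi v * \sum_(z <- Z) z.1.
  by rewrite mulr_sumr -big_split; apply: eq_bigr => z _ /=; ring.
rewrite (bigID (fun z => z.2 < v)) /= [X in _ + X + _]big1_seq ?addr0; last first.
  move=> z /andP[]; rewrite -leNgt => vz /w_top zv.
  by rewrite [z.2](@le_anti _ _ _ v) ?zv // subrr mulr0.
apply: addr_ge0; last first.
  apply: mulr_ge0; first exact/psi_ge0/ZD.
  have := Zcum (v + 1); rewrite -[in X in X -> _]big_filter.
  suff -> : [seq z <- Z | z.2 < v + 1] = Z by [].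
  by apply/all_filterP/allP => z /w_top zv /=; rewrite (le_lt_trans zv) ?ltrDl.
rewrite -big_filter; apply: (IH [pred u in D | u <= v] (fun u => psi u - psi v)).
- have w_kept : (0 < count (predC (fun z : R * R => (z.2 < v)%R)) Z)%N.
    by rewrite -has_count; apply/hasP; exists w => //=; rewrite ltxx.
  have := count_predC (fun z : R * R => (z.2 < v)%R) Z; rewrite size_filter; lia.
- move=> u u' /andP[uD _] /andP[u'D _] uu'.
  by rewrite lerD2r psi_dec.
- by move=> u /andP[uD uv]; rewrite subr_ge0 psi_dec // ZD.
- by move=> z; rewrite mem_filter => /andP[zv /ZD zD]; rewrite inE zD ltW.
- move=> t; rewrite big_filter_cond.
  rewrite (eq_bigl (fun z => z.2 < Order.min v t)) ?Zcum // => z.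
  by rewrite lt_min.
Qed.

Lemma sum_mul_nonincreasing_le_of_tail_mass D psi X Y :
  {in D &, {homo psi : u v /~ u <= v}} -> {in D, forall v, 0 <= psi v} ->
  (forall z, z \in X ++ Y -> z.2 \in D) ->
  \sum_(x <- X) x.1 = \sum_(y <- Y) y.1 ->
  (forall t, tail_mass X t <= tail_mass Y t) ->
  \sum_(y <- Y) y.1 * psi y.2 <= \sum_(x <- X) x.1 * psi x.2.
Proof.
move=> psi_dec psi_ge0 XYD XY_mass XY_tail.
set Z := X ++ [seq (- y.1, y.2) | y <- Y].
have below_t W t : \sum_(w <- W | w.2 < t) w.1 = \sum_(w <- W) w.1 - tail_mass W t.
  rewrite /tail_mass [X in _ = X - _](bigID (fun w => w.2 < t)) /=.
  rewrite [X in _ = _ + X - _](eq_bigl (fun w => t <= w.2)) ?addrK // => w.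
  by rewrite -leNgt.
rewrite -subr_ge0.
have -> : \sum_(x <- X) x.1 * psi x.2 - \sum_(y <- Y) y.1 * psi y.2 =
          \sum_(z <- Z) z.1 * psi z.2.
  rewrite big_cat big_map -sumrN; congr (_ + _).
  by apply: eq_bigr => y _; rewrite mulNr.
apply: sum_mul_nonincreasing_ge0 psi_dec psi_ge0 _ _.
  move=> z; rewrite mem_cat => /orP[zX|/mapP[y yY ->]].
    by apply: XYD; rewrite mem_cat zX.
  by apply: (XYD y); rewrite mem_cat yY orbT.
move=> t; rewrite big_cat big_map /= sumrN subr_ge0 !below_t.
by rewrite XY_mass lerD2l lerN2.
Qed.

End TailDominance.

Section LevelCost.
Variable R : realType.
Implicit Types (c : R) (Y : seq (R * R)).

Definition level_cost c Y := \sum_(y <- Y) y.1 * y.2 `^ (c - 1).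

Lemma level_cost_cat c Y1 Y2 :
  level_cost c (Y1 ++ Y2) = level_cost c Y1 + level_cost c Y2.
Proof. exact: big_cat. Qed.

End LevelCost.

Section MassAbove.
Variables (R : realType) (T : finType).
Implicit Types (a : T -> R) (t : R).

Definition mass_above a t := \sum_(k | t <= a k) a k.

Lemma mass_above_ge0 a t : (forall k, 0 <= a k) -> 0 <= mass_above a t.
Proof. by move=> a_ge0; apply: sumr_ge0. Qed.

Lemma mass_above_eq0 a t : (forall k, a k < t) -> mass_above a t = 0.
Proof. by move=> a_lt; rewrite /mass_above big_pred0 // => k; rewrite leNgt a_lt. Qed.

Lemma maxmass_ge a k : a k <= maxmass a.
Proof. exact: le_bigmax. Qed.

Lemma maxmass_ge0 a : 0 <= maxmass a.
Proof. exact: bigmax_ge_id. Qed.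

Lemma maxmass_eq0 a : (forall k, 0 <= a k) -> maxmass a = 0 -> forall k, a k = 0.
Proof. by move=> a_ge0 a0 k; apply: le_anti; rewrite a_ge0 -a0 maxmass_ge. Qed.

Lemma exists_maxmass a : (forall k, 0 <= a k) -> maxmass a != 0 ->
  exists i, a i = maxmass a.
Proof.
move=> a_ge0; case: (pickP (fun _ : T => true)) => [k _ _|T0]; last first.
  by rewrite /maxmass big_pred0 ?eqxx.
have [i _ ai_max] := @eq_bigmax _ _ T 0 k xpredT a isT (fun i _ => a_ge0 i).
by exists i; rewrite /maxmass ai_max.
Qed.

Lemma subat_ge0 a i r : (forall k, 0 <= a k) -> r <= a i ->
  forall k, 0 <= subat a i r k.
Proof.
by move=> a_ge0 r_le k; rewrite /subat; case: eqP => [->|_]; rewrite ?subr_ge0.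
Qed.

Lemma sum_subat a i r : \sum_k subat a i r k = \sum_k a k - r.
Proof.
rewrite (bigD1 i) //= [in RHS](bigD1 i) //= /subat eqxx addrAC.
by congr (_ + _ - _); apply: eq_bigr => k /negbTE ->.
Qed.

Lemma mass_above_subat a i r t :
  mass_above (subat a i r) t = mass_above a t - (if t <= a i then a i else 0)
                               + (if t <= a i - r then a i - r else 0).
Proof.
rewrite /mass_above !(big_mkcond (fun k => t <= _)) /=.
rewrite (bigD1 i) //= [in RHS](bigD1 i) //= /subat eqxx.
rewrite (eq_bigr (fun k => if t <= a k then a k else 0)); first lra.
by move=> k /negbTE ->.
Qed.

Lemma support_subat_subset a i r : a i != 0 -> support (subat a i r) \subset support a.
Proof.
move=> ai_neq0; apply/subsetP => k; rewrite !inE /subat.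
by case: (k =P i) => [->|].
Qed.

Lemma card_support_subat_lt a i :
  a i != 0 -> (#|support (subat a i (a i))| < #|support a|)%N.
Proof.
move=> ai_neq0; apply: proper_card; rewrite properE support_subat_subset //=.
by apply/subsetPn; exists i; rewrite !inE /subat ?eqxx ?subrr ?eqxx.
Qed.

End MassAbove.

Section Atoms.
Variables (R : realType) (T : finType) (p : T -> R).
Hypothesis p_ge0 : forall k, 0 <= p k.

(* States of mass 0 are dropped: 0 `^ (c - 1) = 0 would break monotonicity. *)
Definition atoms : seq (R * R) := [seq (p k, p k) | k <- index_enum T & 0 < p k].

Lemma atoms_level_gt0 y : y \in atoms -> 0 < y.2.
Proof. by case/mapP => k; rewrite mem_filter => /andP[pk_gt0 _] ->. Qed.

Lemma atoms_mass : \sum_(y <- atoms) y.1 = \sum_k p k.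
Proof.
rewrite big_map big_filter [RHS](bigID (fun k => 0 < p k)) /=.
rewrite [X in _ = _ + X]big1 ?addr0 //.
by move=> k; rewrite -leNgt => pk_le0; apply: le_anti; rewrite pk_le0 p_ge0.
Qed.

Lemma tail_mass_atoms t : 0 < t -> tail_mass atoms t = mass_above p t.
Proof.
move=> t_gt0; rewrite /tail_mass big_map big_filter_cond /=.
apply: eq_bigl => k; case: (leP t (p k)) => tp.
  by rewrite andbT (lt_le_trans t_gt0).
by rewrite andbF.
Qed.

Lemma level_cost_atoms c : 0 < c -> level_cost c atoms = Fcost_fun c p.
Proof.
move=> c_gt0; rewrite /level_cost big_map big_filter /Fcost_fun.
rewrite [RHS](bigID (fun k => 0 < p k)) /= [X in _ = _ + X]big1 ?addr0.
  by apply: eq_bigr => k _; rewrite mulr_powRB1.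
move=> k; rewrite -leNgt => pk_le0.
by rewrite (@le_anti _ _ (p k) 0) ?pk_le0 ?p_ge0 // powR0 ?gt_eqF.
Qed.

End Atoms.

Section Couplings.
Variables (R : realType) (T1 T2 : finType).
Variables (p1 : T1 -> R) (p2 : T2 -> R) (C : T1 * T2 -> R).
Hypothesis C_coupling : is_coupling p1 p2 C.

Lemma coupling_swap : is_coupling p2 p1 (fun ji => C (ji.2, ji.1)).
Proof. by case: C_coupling => C_ge0 [p1C p2C]; split=> [[]|]. Qed.

Lemma sum_coupling : \sum_ij C ij = \sum_i p1 i.
Proof.
case: C_coupling => _ [p1C _].
rewrite [RHS](eq_bigr (fun i => \sum_j C (i, j))) => [|i _]; last by rewrite p1C.
by rewrite pair_big; apply: eq_bigr => -[].
Qed.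

Lemma coupling_le_l ij : C ij <= p1 ij.1.
Proof.
case: C_coupling => C_ge0 [p1C _]; case: ij => i j /=.
by rewrite -p1C (bigD1 j) //= lerDl sumr_ge0.
Qed.

Lemma mass_above_coupling_l t : mass_above C t <= mass_above p1 t.
Proof.
case: C_coupling => C_ge0 [p1C _].
rewrite /mass_above [leRHS](eq_bigr (fun i => \sum_j C (i, j))) => [|i _].
  2: by rewrite p1C.
rewrite pair_big_dep big_mkcond [leRHS]big_mkcond; apply: ler_sum => -[i j] _ /=.
have /= Cp := coupling_le_l (i, j); rewrite andbT.
case: (leP t (C (i, j))) => tC; case: (leP t (p1 i)) => tp //.
  by move: tp; rewrite ltNge (le_trans tC Cp).
Qed.

End Couplings.

Lemma mass_above_coupling (R : realType) (T1 T2 : finType)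
    (p1 : T1 -> R) (p2 : T2 -> R) (C : T1 * T2 -> R) t :
  is_coupling p1 p2 C ->
  mass_above C t <= Order.min (mass_above p1 t) (mass_above p2 t).
Proof.
move=> C_coupling; rewrite le_min (mass_above_coupling_l C_coupling) /=.
apply: le_trans (mass_above_coupling_l (coupling_swap C_coupling) t).
rewrite /mass_above [leRHS](reindex (fun ij : T1 * T2 => (ij.2, ij.1))) /=.
  by rewrite [leRHS](eq_big (fun ij => t <= C ij) C) // => -[].
by exists (fun ji : T2 * T1 => (ji.2, ji.1)) => -[].
Qed.

Lemma level_cost_le_Fcost_coupling (R : realType) (c : R) (T1 T2 : finType)
    (p1 : T1 -> R) (p2 : T2 -> R) (C : T1 * T2 -> R) (Y : seq (R * R)) :
  0 < c < 1 -> is_coupling p1 p2 C ->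
  (forall y, y \in Y -> 0 < y.2) -> \sum_(y <- Y) y.1 = \sum_i p1 i ->
  (forall t, 0 < t -> Order.min (mass_above p1 t) (mass_above p2 t) <= tail_mass Y t) ->
  level_cost c Y <= Fcost_fun c C.
Proof.
move=> /andP[c_gt0 c_lt1] C_coupling Y_pos Y_mass Y_tail.
have C_ge0 : forall ij, 0 <= C ij by case: C_coupling.
have levels_pos z : z \in atoms C ++ Y -> z.2 \in Num.pos.
  by rewrite mem_cat posrE => /orP[/atoms_level_gt0|/Y_pos].
rewrite -(level_cost_atoms C_ge0 c_gt0) /level_cost.
apply: (@sum_mul_nonincreasing_le_of_tail_mass _ Num.pos (fun v => v `^ (c - 1)))
  levels_pos _ _.
- by apply: le0_ger_powR; rewrite subr_le0 ltW.
- by move=> v _; apply: powR_ge0.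
- by rewrite (atoms_mass C_ge0) (sum_coupling C_coupling).
move=> t; have [t_le0|t_gt0] := leP t 0.
  rewrite !tail_mass_below ?(atoms_mass C_ge0) ?(sum_coupling C_coupling) ?Y_mass //
    => z zX.
    by rewrite (le_trans t_le0) // ltW // Y_pos.
  by rewrite (le_trans t_le0) // ltW // (atoms_level_gt0 zX).
rewrite tail_mass_atoms //; apply: le_trans (Y_tail t t_gt0).
exact: mass_above_coupling.
Qed.

Section GreedyCertificate.
Variable R : realType.
Implicit Types (A B c g e t : R) (Y : seq (R * R)).

(* A greedy step g = min A B leaves a residue e = |A - B|; when 0 < e < g its
   mass g is split as g + e at level g minus e at level e, matching the tail of
   the larger side, whose state of size g + e becomes one of size e. *)
Definition greedy_atoms A B : seq (R * R) :=
  let g := Order.min A B in let e := Order.max A B - g in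
  if (0 < e) && (e < g) then [:: (g + e, g); (- e, e)] else [:: (g, g)].

Lemma greedy_atomsC A B : greedy_atoms A B = greedy_atoms B A.
Proof. by rewrite /greedy_atoms minC maxC. Qed.

Lemma greedy_atoms_level_gt0 A B y :
  0 < Order.min A B -> y \in greedy_atoms A B -> 0 < y.2.
Proof.
rewrite /greedy_atoms => g_gt0; case: ifP => [/andP[e_gt0 _]|_].
  by rewrite !inE => /orP[|] /eqP->.
by rewrite inE => /eqP->.
Qed.

Lemma greedy_atoms_mass A B : \sum_(y <- greedy_atoms A B) y.1 = Order.min A B.
Proof.
by rewrite /greedy_atoms; case: ifP => _; rewrite !big_cons big_nil /=; ring.
Qed.

Lemma greedy_atoms_level_cost c A B : 0 < c < 1 -> 0 < Order.min A B ->
  (1 - young_const c) * Order.min A B `^ c <= level_cost c (greedy_atoms A B).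
Proof.
move=> c01 g_gt0; have [c_gt0 _] := andP c01.
rewrite /level_cost /greedy_atoms; move: g_gt0; set g := Order.min A B.
set e := _ - g => g_gt0.
have g_c : g * g `^ (c - 1) = g `^ c by rewrite mulr_powRB1 ?ltW.
case: ifP => [/andP[e_gt0 _]|_]; rewrite !big_cons big_nil /= addr0.
  have e_c : e * e `^ (c - 1) = e `^ c by rewrite mulr_powRB1 ?ltW.
  have := powR_le_add_young_const_scaled c01 g_gt0 (ltW e_gt0).
  by rewrite mulNr e_c [(g + e) * _]mulrDl g_c; lra.
have := young_const_ge0 c01; have := powR_ge0 g c.
by rewrite g_c; nra.
Qed.

Lemma greedy_atoms_level_le A B y :
  y \in greedy_atoms A B -> y.2 <= Order.min A B.
Proof.
rewrite /greedy_atoms; case: ifP => [/andP[_ /ltW e_le]|_].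
  by rewrite !inE => /orP[|] /eqP->.
by rewrite inE => /eqP->.
Qed.

(* For t <= min A B both tails drop by at most the tail of the step's atoms;
   for t > min A B the side with the smaller maximum has no mass above t. *)
Lemma min_mass_above_greedy_step (T1 T2 : finType) (a : T1 -> R) (b : T2 -> R)
    i j t :
  (forall k, 0 <= a k) -> (forall k, 0 <= b k) ->
  a i = maxmass a -> b j = maxmass b -> 0 < t ->
  Order.min (mass_above a t) (mass_above b t) <=
  tail_mass (greedy_atoms (maxmass a) (maxmass b)) t +
  Order.min (mass_above (subat a i (Order.min (maxmass a) (maxmass b))) t)
            (mass_above (subat b j (Order.min (maxmass a) (maxmass b))) t).
Proof.
wlog AB : T1 T2 a b i j / maxmass a <= maxmass b => [wlog_AB|] a_ge0 b_ge0 ai bj t_gt0.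
  have [AB|BA] := orP (le_total (maxmass a) (maxmass b)); first exact: wlog_AB.
  rewrite minC greedy_atomsC [X in _ + X]minC (minC (maxmass a)).
  exact: wlog_AB.
rewrite (min_l AB); set A := maxmass a in ai AB *; set B := maxmass b in bj AB *.
have Sa'_ge0 : 0 <= mass_above (subat a i A) t.
  by apply/mass_above_ge0/subat_ge0; rewrite ?ai.
have Sb'_ge0 : 0 <= mass_above (subat b j A) t.
  by apply/mass_above_ge0/subat_ge0; rewrite ?bj.
have [tA|At] := leP t A; last first.
  have Sa0 : mass_above a t = 0.
    by apply: mass_above_eq0 => k; apply: le_lt_trans (maxmass_ge a k) At.
  have tail0 : tail_mass (greedy_atoms A B) t = 0.
    apply: tail_mass_eq0 => y /greedy_atoms_level_le.
    by rewrite (min_l AB) => /le_lt_trans; apply.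
  by rewrite Sa0 tail0 add0r le_min !ge_min Sa'_ge0 Sb'_ge0.
have Sa : mass_above a t = mass_above (subat a i A) t + A.
  by rewrite mass_above_subat ai tA subrr if_same addr0 subrK.
have Sb : mass_above b t =
    mass_above (subat b j A) t + (B - if t <= B - A then B - A else 0).
  by rewrite mass_above_subat bj (le_trans tA AB); ring.
have tail_eq : tail_mass (greedy_atoms A B) t =
    if (0 < B - A) && (B - A < A) then B - (if t <= B - A then B - A else 0) else A.
  rewrite /tail_mass /greedy_atoms (min_l AB) (max_r AB).
  by case: ifP => _; rewrite !big_cons big_nil /= tA; case: (t <= B - A); ring.
rewrite Sa Sb [leRHS]addrC addr_minl tail_eq.
have [/andP[e_gt0 e_ltA]|e_cond] := boolP ((0 < B - A) && (B - A < A)).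
  apply: le_min2; rewrite lerD2l //.
  by case: (leP t (B - A)) => _; lra.
apply: le_min2; rewrite lerD2l //.
by move: e_cond; rewrite negb_and -!leNgt; case: (leP t (B - A)) => te /orP[] ?; lra.
Qed.

End GreedyCertificate.

Section GreedyRun.
Variables (R : realType) (T1 T2 : finType).

Lemma greedy_run_certificate c (a : T1 -> R) (b : T2 -> R) out :
  0 < c < 1 -> greedy_run a b out ->
  (forall k, 0 <= a k) -> (forall k, 0 <= b k) -> \sum_k a k = \sum_k b k ->
  exists Y : seq (R * R), [/\ forall y, y \in Y -> 0 < y.2,
    \sum_(y <- Y) y.1 = \sum_k a k,
    forall t, 0 < t -> Order.min (mass_above a t) (mass_above b t) <= tail_mass Y t &
    (1 - young_const c) * Fcost_seq c out <= level_cost c Y].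
Proof.
move=> c01; elim=> {a b out} [a b stop|a b i j out g_neq0 ai bj _ IH] a_ge0 b_ge0 ab_sum.
  have a0_or_b0 : (forall k, a k = 0) \/ (forall k, b k = 0).
    case: (leP (maxmass a) (maxmass b)) stop => _ /maxmass_eq0 m0;
      [left|right]; exact: m0.
  have a_sum0 : \sum_k a k = 0.
    by case: a0_or_b0 => [a0|b0]; [|rewrite ab_sum]; apply: big1.
  exists [::]; split => //.
  - by rewrite big_nil a_sum0.
  - move=> t t_gt0; rewrite /tail_mass big_nil ge_min.
    by case: a0_or_b0 => ab0; apply/orP; [left|right];
      rewrite mass_above_eq0 // => k; rewrite ab0.
  - by rewrite /Fcost_seq /level_cost !big_nil mulr0.
set A := maxmass a in g_neq0 ai IH *; set B := maxmass b in g_neq0 bj IH *.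
set g := Order.min A B in g_neq0 IH *.
have g_gt0 : 0 < g by rewrite lt_def g_neq0 le_min maxmass_ge0 maxmass_ge0.
have g_le_ai : g <= a i by rewrite ai ge_min lexx.
have g_le_bj : g <= b j by rewrite bj ge_min lexx orbT.
have ab'_sum : \sum_k subat a i g k = \sum_k subat b j g k.
  by rewrite !sum_subat ab_sum.
have [Y [Y_pos Y_mass Y_tail Y_cost]] :=
  IH (subat_ge0 a_ge0 g_le_ai) (subat_ge0 b_ge0 g_le_bj) ab'_sum.
exists (greedy_atoms A B ++ Y); split.
- move=> y; rewrite mem_cat => /orP[/greedy_atoms_level_gt0|/Y_pos]; exact.
- by rewrite big_cat /= greedy_atoms_mass Y_mass sum_subat addrC subrK.
- move=> t t_gt0; rewrite tail_mass_cat.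
  apply: le_trans (min_mass_above_greedy_step a_ge0 b_ge0 ai bj t_gt0) _.
  by rewrite lerD2l Y_tail.
- rewrite /Fcost_seq big_cons -/(Fcost_seq c out) level_cost_cat mulrDr.
  by apply: lerD => //; apply: greedy_atoms_level_cost.
Qed.

Lemma greedy_run_exists (a : T1 -> R) (b : T2 -> R) :
  (forall k, 0 <= a k) -> (forall k, 0 <= b k) -> exists out, greedy_run a b out.
Proof.
move: {-1}(#|support a| + #|support b|)%N (leqnn (#|support a| + #|support b|)) => n.
elim: n a b => [|n IH] a b supp_n a_ge0 b_ge0;
  have [g0|g_neq0] := eqVneq (Order.min (maxmass a) (maxmass b)) 0;
  try by exists [::]; constructor.
all: have A_neq0 : maxmass a != 0
  by apply: contraNneq g_neq0 => ->; rewrite min_l ?maxmass_ge0.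
all: have B_neq0 : maxmass b != 0
  by apply: contraNneq g_neq0 => ->; rewrite min_r ?maxmass_ge0.
all: have [i ai] := exists_maxmass a_ge0 A_neq0.
all: have [j bj] := exists_maxmass b_ge0 B_neq0.
  suff : (0 < #|support a|)%N by lia.
  by apply/card_gt0P; exists i; rewrite inE ai.
set g := Order.min (maxmass a) (maxmass b) in g_neq0 *.
have g_le_ai : g <= a i by rewrite ai ge_min lexx.
have g_le_bj : g <= b j by rewrite bj ge_min lexx orbT.
have [ai_neq0 bj_neq0] : a i != 0 /\ b j != 0 by rewrite ai bj.
have [out run] : exists out, greedy_run (subat a i g) (subat b j g) out.
  apply: IH (subat_ge0 a_ge0 g_le_ai) (subat_ge0 b_ge0 g_le_bj).
  rewrite -ltnS (leq_trans _ supp_n) //.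
  have [AB|BA] := orP (le_total (maxmass a) (maxmass b)).
    have gE : g = a i by rewrite ai /g (min_l AB).
    rewrite -addSn leq_add ?subset_leq_card ?support_subat_subset //.
    by rewrite gE card_support_subat_lt.
  have gE : g = b j by rewrite bj /g (min_r BA).
  rewrite -addnS leq_add ?subset_leq_card ?support_subat_subset //.
  by rewrite gE card_support_subat_lt.
by exists (g :: out); apply: greedy_step g_neq0 ai bj run.
Qed.

End GreedyRun.

Theorem corollary3 (R : realType) (c : R) (T1 T2 : finType)
  (p1 : T1 -> R) (p2 : T2 -> R) :
  0 < c < 1 -> is_distr p1 -> is_distr p2 ->
  (exists out, greedy_run p1 p2 out) /\
  (forall out, greedy_run p1 p2 out ->
   forall C : T1 * T2 -> R, is_coupling p1 p2 C ->
   Fcost_seq c out <=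
     (1 - c `^ (1 / (1 - c)) * (1 / c - 1))^-1 * Fcost_fun c C).
Proof.
move=> c01 [p1_ge0 p1_sum] [p2_ge0 p2_sum]; split; first exact: greedy_run_exists.
move=> out run C C_coupling.
have [Y [Y_pos Y_mass Y_tail Y_cost]] :=
  greedy_run_certificate c01 run p1_ge0 p2_ge0 (etrans p1_sum (esym p2_sum)).
rewrite -/(young_const c) ler_pdivlMl ?subr_gt0 ?young_const_lt1 //.
exact: le_trans Y_cost (level_cost_le_Fcost_coupling c01 C_coupling Y_pos Y_mass Y_tail).
Qed.
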